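(* Let $f$ be smooth and of bistable type: there is $\alpha\in(0,1)$ with $f(0)=f(\alpha)=f(1)=0$, $f'(0)<0$, $f'(1)<0$, $f'(\alpha)>0$, $f>0$ on $(-\infty,0)\cup(\alpha,1)$ and $f<0$ on $(0,\alpha)\cup(1,+\infty)$. Let $\tau\in[0,\tau_m)$ with $\tau_m:=1/\sup_{u\in[0,1]}|f'(u)|$. Suppose $c\in\mathbb{R}$ and $(U,V)$ is a solution of $$cU_\xi+V_\xi+f(U)=0,\qquad U_\xi+c\tau V_\xi-V=0,\qquad \xi\in\mathbb{R},$$ satisfying $(U,V)(-\infty)=(0,0)$ and $(U,V)(+\infty)=(1,0)$. Then (i) $c$ has the same sign as $-\int_0^1 f(u)\,du$; (ii) $c^2\tau<1$. *)

From Stdlib Require Import Reals.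
From Coquelicot Require Import Coquelicot.
Open Scope R_scope.

Definition smooth (f : R -> R) : Prop :=
  forall (n : nat) (x : R), ex_derive_n f n x.

Definition bistable (f : R -> R) (alpha : R) : Prop :=
  0 < alpha < 1 /\
  f 0 = 0 /\ f alpha = 0 /\ f 1 = 0 /\
  Derive f 0 < 0 /\ Derive f 1 < 0 /\ 0 < Derive f alpha /\
  (forall u, u < 0 -> 0 < f u) /\
  (forall u, alpha < u < 1 -> 0 < f u) /\
  (forall u, 0 < u < alpha -> f u < 0) /\
  (forall u, 1 < u -> f u < 0).

Definition sup_abs_deriv01 (f : R -> R) : Rbar :=
  Lub_Rbar (fun y => exists u, 0 <= u <= 1 /\ y = Rabs (Derive f u)).

(* tau_m := 1 / sup_{u in [0,1]} |f'(u)| (the sup is finite and positive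
   for smooth bistable f). *)
Definition tau_m (f : R -> R) : R := / real (sup_abs_deriv01 f).

Definition tw_solution (f : R -> R) (tau c : R) (U V : R -> R) : Prop :=
  (forall xi, ex_derive U xi) /\ (forall xi, ex_derive V xi) /\
  (forall xi, c * Derive U xi + Derive V xi + f (U xi) = 0) /\
  (forall xi, Derive U xi + c * tau * Derive V xi - V xi = 0) /\
  is_lim U m_infty 0 /\ is_lim V m_infty 0 /\
  is_lim U p_infty 1 /\ is_lim V p_infty 0.

(* Write P := U'.  The system gives V = D P - c tau f(U) with D := 1 - c^2 tau, and,
   when D <> 0, D P' = - c g(U) P - f(U) with g := 1 - tau f'.  Hence the energy
   E := D P^2 / 2 + F(U), where F is the primitive of f vanishing at 0, satisfies
   E' = - c g(U) P^2, and E tends to 0 at -oo and to F(1) = int_0^1 f at +oo.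

   If D > 0, a maximum principle keeps U in [0,1], where g > 0 since tau < tau_m; so E
   is monotone with the sign of -c, strictly where P <> 0, which gives (i).
   D = 0 is impossible: then c g(U) P = - f(U), so |U'| <= K |U - alpha| and U could never
   leave alpha after reaching it.  D < 0 is impossible: then E <= F(U), and on a tail where
   U stays close to the end state towards which E is monotone (0 at -oo if c < 0, 1 at
   +oo if c > 0), F(U) lies strictly on the wrong side of the limit of E unless U equals
   that state, so U would be constant. *)

From Stdlib Require Import Reals Lra Classical.
From Coquelicot Require Import Coquelicot.
Open Scope R_scope.

(* [auto_derive] leaves eta-expanded terms [Derive (fun x => h x)] behind. *)
Ltac Derive_eta :=
  repeat match goal with
  | |- context [Derive (fun x : R => ?h x)] => change (fun x : R => h x) with h
  end.

Lemma continuous_eps (h : R -> R) (x eps : R) : continuous h x -> 0 < eps ->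
  exists d, 0 < d /\ forall y, Rabs (y - x) < d -> Rabs (h y - h x) < eps.
Proof.
  intros Hc He.
  destruct (Hc _ (locally_ball (h x) (mkposreal eps He))) as [d Hd].
  exists d; split; [apply cond_pos | intros y Hy; apply (Hd y Hy)].
Qed.

Lemma is_lim_p_infty_eps (h : R -> R) (l eps : R) : is_lim h p_infty l -> 0 < eps ->
  exists N, forall y, N < y -> Rabs (h y - l) < eps.
Proof.
  intros Hl He.
  destruct (Hl _ (locally_ball l (mkposreal eps He))) as [N HN].
  exists N; intros y Hy; apply (HN y Hy).
Qed.

Lemma is_lim_m_infty_eps (h : R -> R) (l eps : R) : is_lim h m_infty l -> 0 < eps ->
  exists N, forall y, y < N -> Rabs (h y - l) < eps.
Proof.
  intros Hl He.
  destruct (Hl _ (locally_ball l (mkposreal eps He))) as [N HN].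
  exists N; intros y Hy; apply (HN y Hy).
Qed.

Lemma is_lim_lin_comb (p q : R -> R) (x : Rbar) (a b k1 k2 : R) :
  is_lim p x a -> is_lim q x b -> is_lim (fun y => k1 * p y + k2 * q y) x (k1 * a + k2 * b).
Proof.
  intros Hp Hq.
  apply is_lim_plus'; [exact (is_lim_scal_l p k1 x a Hp) | exact (is_lim_scal_l q k2 x b Hq)].
Qed.

Lemma is_lim_le_const (h : R -> R) (x : Rbar) (l K : R) :
  Rbar_locally' x (fun y => h y <= K) -> is_lim h x l -> l <= K.
Proof. intros Hloc Hl. exact (is_lim_le_loc h (fun _ => K) x l K Hloc Hl (is_lim_const K x)). Qed.

Lemma is_lim_ge_const (h : R -> R) (x : Rbar) (l K : R) :
  Rbar_locally' x (fun y => K <= h y) -> is_lim h x l -> K <= l.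
Proof. intros Hloc Hl. exact (is_lim_le_loc (fun _ => K) h x K l Hloc (is_lim_const K x) Hl). Qed.

Lemma ex_derive_continuous_R (h : R -> R) (x : R) : ex_derive h x -> continuous h x.
Proof. exact (ex_derive_continuous (K := R_AbsRing) (V := R_NormedModule) h x). Qed.

Lemma RInt_zero (a b : R) : RInt (fun _ => 0) a b = 0.
Proof. rewrite RInt_const. apply Rmult_0_r. Qed.

Lemma is_derive_Ropp (h : R -> R) (x l : R) :
  is_derive h x l -> is_derive (fun y => - h y) x (- l).
Proof. exact (is_derive_opp h x l). Qed.

Lemma is_derive_pos_local (h : R -> R) (x l : R) : is_derive h x l -> 0 < l ->
  exists d, 0 < d /\ (forall y, x < y < x + d -> h x < h y) /\
    (forall y, x - d < y < x -> h y < h x).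
Proof.
  intros Hd Hl. apply is_derive_Reals in Hd.
  destruct (Hd l Hl) as [d Hd'].
  exists d; split; [apply cond_pos|].
  assert (Hquot : forall y, y <> x -> Rabs (y - x) < d -> 0 < (h y - h x) / (y - x)).
  { intros y Hyx Hy. specialize (Hd' (y - x)).
    replace (x + (y - x)) with y in Hd' by ring.
    apply Rabs_def2 in Hd'; [lra | lra | exact Hy]. }
  split; intros y Hy.
  - assert (Hq := Hquot y ltac:(lra) ltac:(rewrite Rabs_right; lra)).
    apply (Rmult_lt_compat_r (y - x)) in Hq; [|lra].
    field_simplify in Hq; lra.
  - assert (Hq := Hquot y ltac:(lra) ltac:(rewrite Rabs_left; lra)).
    apply (Rmult_lt_compat_r (x - y)) in Hq; [|lra].
    replace ((h y - h x) / (y - x) * (x - y)) with (h x - h y) in Hq by (field; lra).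
    lra.
Qed.

Lemma nonincreasing_of_deriv_nonpos (h dh : R -> R) (a b : R) : a <= b ->
  (forall x, a <= x <= b -> is_derive h x (dh x)) ->
  (forall x, a <= x <= b -> dh x <= 0) -> h b <= h a.
Proof.
  intros Hab Hd Hs. destruct (Req_dec a b) as [<- | Hne]; [lra|].
  destruct (MVT_cor2 h dh a b) as [y [Hy Hyab]]; [lra | intros; apply is_derive_Reals; auto |].
  assert (dh y * (b - a) <= 0) by (apply Rmult_le_0_r; [apply Hs|]; lra).
  lra.
Qed.

Lemma nondecreasing_of_deriv_nonneg (h dh : R -> R) (a b : R) : a <= b ->
  (forall x, a <= x <= b -> is_derive h x (dh x)) ->
  (forall x, a <= x <= b -> 0 <= dh x) -> h a <= h b.
Proof.
  intros Hab Hd Hs.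
  enough (- h b <= - h a) by lra.
  apply (nonincreasing_of_deriv_nonpos (fun y => - h y) (fun y => - dh y) a b Hab).
  - intros x Hx; apply is_derive_Ropp, Hd, Hx.
  - intros x Hx; specialize (Hs x Hx); lra.
Qed.

Lemma global_max_deriv_eq0 (h : R -> R) (xm l : R) :
  is_derive h xm l -> (forall x, h x <= h xm) -> l = 0.
Proof.
  intros Hd Hm. destruct (Rtotal_order l 0) as [Hl | [Hl | Hl]]; [exfalso | exact Hl | exfalso].
  - destruct (is_derive_pos_local (fun y => - h y) xm (- l)) as [d [Hd0 [_ Hleft]]].
    + apply is_derive_Ropp, Hd.
    + lra.
    + specialize (Hleft (xm - d / 2) ltac:(lra)). specialize (Hm (xm - d / 2)). lra.
  - destruct (is_derive_pos_local h xm l Hd Hl) as [d [Hd0 [Hright _]]].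
    specialize (Hright (xm + d / 2) ltac:(lra)). specialize (Hm (xm + d / 2)). lra.
Qed.

Lemma global_min_deriv_eq0 (h : R -> R) (xm l : R) :
  is_derive h xm l -> (forall x, h xm <= h x) -> l = 0.
Proof.
  intros Hd Hm. enough (- l = 0) by lra.
  apply (global_max_deriv_eq0 (fun y => - h y) xm); [apply is_derive_Ropp, Hd|].
  intros x; specialize (Hm x); lra.
Qed.

Lemma global_max_deriv2_nonpos (h dh : R -> R) (xm l : R) :
  (forall x, is_derive h x (dh x)) -> is_derive dh xm l ->
  (forall x, h x <= h xm) -> l <= 0.
Proof.
  intros Hh Hd Hm. destruct (Rle_lt_dec l 0) as [Hl | Hl]; [exact Hl | exfalso].
  assert (H0 : dh xm = 0) by exact (global_max_deriv_eq0 h xm _ (Hh xm) Hm).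
  destruct (is_derive_pos_local dh xm l Hd Hl) as [d [Hd0 [_ Hleft]]].
  destruct (MVT_cor2 h dh (xm - d / 2) xm) as [y [Hy Hyint]];
    [lra | intros; apply is_derive_Reals, Hh |].
  assert (Hdy : dh y < 0) by (rewrite <- H0; apply Hleft; lra).
  specialize (Hm (xm - d / 2)).
  assert (dh y * (xm - (xm - d / 2)) < 0) by (apply Rmult_neg_pos; lra).
  lra.
Qed.

Lemma global_min_deriv2_nonneg (h dh : R -> R) (xm l : R) :
  (forall x, is_derive h x (dh x)) -> is_derive dh xm l ->
  (forall x, h xm <= h x) -> 0 <= l.
Proof.
  intros Hh Hd Hm. enough (- l <= 0) by lra.
  apply (global_max_deriv2_nonpos (fun y => - h y) (fun y => - dh y) xm).
  - intros x; apply is_derive_Ropp, Hh.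
  - apply is_derive_Ropp, Hd.
  - intros x; specialize (Hm x); lra.
Qed.

Lemma ex_global_max (h : R -> R) (a b x0 : R) : (forall x, continuous h x) ->
  is_lim h m_infty a -> is_lim h p_infty b -> a < h x0 -> b < h x0 ->
  exists xm, forall x, h x <= h xm.
Proof.
  intros Hc Ha Hb Hax Hbx.
  destruct (is_lim_m_infty_eps h a (h x0 - a) Ha) as [M HM]; [lra|].
  destruct (is_lim_p_infty_eps h b (h x0 - b) Hb) as [N HN]; [lra|].
  set (l := Rmin M x0 - 1). set (r := Rmax N x0 + 1).
  assert (Hl : l < M /\ l < x0) by (unfold l; generalize (Rmin_l M x0) (Rmin_r M x0); lra).
  assert (Hr : N < r /\ x0 < r) by (unfold r; generalize (Rmax_l N x0) (Rmax_r N x0); lra).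
  destruct (continuity_ab_maj h l r) as [xm [Hmax _]];
    [lra | intros; apply continuity_pt_filterlim, Hc |].
  exists xm; intro x.
  assert (Hx0 := Hmax x0 ltac:(lra)).
  destruct (Rlt_le_dec x l) as [Hxl | Hlx]; [|destruct (Rle_lt_dec x r) as [Hxr | Hrx]].
  - specialize (HM x ltac:(lra)). apply Rabs_def2 in HM. lra.
  - apply Hmax; lra.
  - specialize (HN x ltac:(lra)). apply Rabs_def2 in HN. lra.
Qed.

Lemma ex_global_min (h : R -> R) (a b x0 : R) : (forall x, continuous h x) ->
  is_lim h m_infty a -> is_lim h p_infty b -> h x0 < a -> h x0 < b ->
  exists xm, forall x, h xm <= h x.
Proof.
  intros Hc Ha Hb Hax Hbx.
  destruct (ex_global_max (fun y => - h y) (- a) (- b) x0) as [xm Hxm].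
  - intro x; apply (continuous_opp h), Hc.
  - exact (is_lim_opp h m_infty a Ha).
  - exact (is_lim_opp h p_infty b Hb).
  - lra.
  - lra.
  - exists xm; intro x; specialize (Hxm x); lra.
Qed.

(* A continuity ("first exit time") argument on [S = {T | h stays d-close to u0 on (-oo, T]}]:
   [S] is a down-closed set, and if it were bounded its supremum would belong to it
   with room to spare. *)
Lemma eq_of_close_on_left_tails (h : R -> R) (u0 d : R) : (forall x, continuous h x) ->
  0 < d -> is_lim h m_infty u0 ->
  (forall T, (forall y, y <= T -> Rabs (h y - u0) < d) -> h T = u0) ->
  forall x, h x = u0.
Proof.
  intros Hc Hd Hl Hclose.
  set (S := fun T => forall y, y <= T -> Rabs (h y - u0) < d).
  enough (HS : forall x, S x) by (intro x; apply Hclose, HS).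
  intro x1. apply NNPP; intro Hx1.
  assert (Hdown : forall z t, S z -> t <= z -> S t) by (intros z t Hz Htz y Hy; apply Hz; lra).
  destruct (is_lim_m_infty_eps h u0 d Hl Hd) as [N HN].
  assert (HN1 : S (N - 1)) by (intros y Hy; apply HN; lra).
  assert (Hbound : bound S).
  { exists x1; intros z Hz. apply Rnot_lt_le; intro Hlt. apply Hx1, (Hdown z); [exact Hz | lra]. }
  destruct (completeness S Hbound (ex_intro _ _ HN1)) as [s [Hub Hlub]].
  assert (Hbelow : forall t, t < s -> h t = u0).
  { intros t Ht. apply Hclose.
    apply NNPP; intro Hnt. enough (s <= t) by lra.
    apply Hlub; intros z Hz. apply Rnot_lt_le; intro Htz. apply Hnt, (Hdown z); [exact Hz | lra]. }
  destruct (continuous_eps h s (d / 2) (Hc s)) as [e [He Hcont]]; [lra|].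
  assert (Hs : Rabs (h s - u0) < d / 2).
  { specialize (Hcont (s - e / 2) ltac:(rewrite Rabs_left; lra)).
    rewrite Hbelow in Hcont by lra. rewrite Rabs_minus_sym; exact Hcont. }
  enough (S (s + e / 2)) by (specialize (Hub _ H); lra).
  intros y Hy. destruct (Rlt_le_dec y s) as [Hys | Hsy].
  - rewrite Hbelow by exact Hys. rewrite Rminus_diag, Rabs_R0. exact Hd.
  - specialize (Hcont y ltac:(rewrite Rabs_right; lra)).
    replace (h y - u0) with ((h y - h s) + (h s - u0)) by ring.
    eapply Rle_lt_trans; [apply Rabs_triang | lra].
Qed.

Lemma eq_of_close_on_right_tails (h : R -> R) (u0 d : R) : (forall x, continuous h x) ->
  0 < d -> is_lim h p_infty u0 ->
  (forall T, (forall y, T <= y -> Rabs (h y - u0) < d) -> h T = u0) ->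
  forall x, h x = u0.
Proof.
  intros Hc Hd Hl Hclose x.
  rewrite <- (Ropp_involutive x).
  apply (eq_of_close_on_left_tails (fun y => h (- y)) u0 d); [| exact Hd | |].
  - intro y. apply (continuous_comp (fun z => - z) h); [|apply Hc].
    exact (continuous_opp (fun z => z) y (continuous_id y)).
  - eapply filterlim_comp; [|exact Hl].
    exact (is_lim_opp (fun y => y) m_infty m_infty (is_lim_id m_infty)).
  - intros T HT. apply Hclose. intros y Hy.
    rewrite <- (Ropp_involutive y). apply HT; lra.
Qed.

(* Gronwall: [(h x)^2 exp (-2 K x)] is nonincreasing and vanishes at [x0]. *)
Lemma eq0_of_abs_deriv_le (h dh : R -> R) (K x0 : R) :
  (forall x, is_derive h x (dh x)) -> (forall x, Rabs (dh x) <= K * Rabs (h x)) ->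
  h x0 = 0 -> forall y, x0 <= y -> h y = 0.
Proof.
  intros Hd Hb H0 y Hy.
  set (Z := fun x => h x ^ 2 * exp (- (2 * K) * x)).
  assert (HZ : Z y <= Z x0).
  { apply (nonincreasing_of_deriv_nonpos Z
      (fun x => 2 * exp (- (2 * K) * x) * (h x * dh x - K * h x ^ 2)) x0 y Hy).
    - intros x _. unfold Z. auto_derive; [exists (dh x); apply Hd|].
      Derive_eta. rewrite (is_derive_unique h x (dh x) (Hd x)). ring.
    - intros x _.
      assert (h x * dh x <= K * h x ^ 2).
      { eapply Rle_trans; [apply Rle_abs|].
        rewrite Rabs_mult, <- (pow2_abs (h x)).
        replace (K * Rabs (h x) ^ 2) with (Rabs (h x) * (K * Rabs (h x))) by ring.
        apply Rmult_le_compat_l; [apply Rabs_pos | apply Hb]. }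
      assert (0 < exp (- (2 * K) * x)) by apply exp_pos.
      nra. }
  assert (HZ0 : Z x0 = 0) by (unfold Z; rewrite H0; ring).
  rewrite HZ0 in HZ; unfold Z in HZ.
  assert (0 < exp (- (2 * K) * y)) by apply exp_pos.
  assert (h y ^ 2 <= 0) by nra.
  nra.
Qed.

Lemma between_limits_of_deriv_nonpos (h dh : R -> R) (a b : R) :
  (forall x, is_derive h x (dh x)) -> (forall x, dh x <= 0) ->
  is_lim h m_infty a -> is_lim h p_infty b -> forall y, b <= h y <= a.
Proof.
  intros Hd Hs Ha Hb y. split.
  - apply (is_lim_le_const h p_infty); [|exact Hb].
    exists y; intros z Hz. apply (nonincreasing_of_deriv_nonpos h dh); auto; lra.
  - apply (is_lim_ge_const h m_infty); [|exact Ha].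
    exists y; intros z Hz. apply (nonincreasing_of_deriv_nonpos h dh); auto; lra.
Qed.

Lemma limits_lt_of_deriv_nonpos (h dh : R -> R) (a b x0 : R) :
  (forall x, is_derive h x (dh x)) -> (forall x, dh x <= 0) -> dh x0 < 0 ->
  is_lim h m_infty a -> is_lim h p_infty b -> b < a.
Proof.
  intros Hd Hs Hx0 Ha Hb.
  destruct (is_derive_pos_local (fun y => - h y) x0 (- dh x0)) as [d [Hd0 [Hright _]]];
    [apply is_derive_Ropp, Hd | lra |].
  specialize (Hright (x0 + d / 2) ltac:(lra)).
  destruct (between_limits_of_deriv_nonpos h dh a b Hd Hs Ha Hb x0).
  destruct (between_limits_of_deriv_nonpos h dh a b Hd Hs Ha Hb (x0 + d / 2)).
  lra.
Qed.

Lemma ex_deriv_neq0 (h : R -> R) (a b : R) : (forall x, ex_derive h x) ->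
  is_lim h m_infty a -> is_lim h p_infty b -> a <> b -> exists x, Derive h x <> 0.
Proof.
  intros Hd Ha Hb Hab.
  set (eps := Rabs (b - a) / 2).
  assert (Hba : 0 < Rabs (b - a)) by (apply Rabs_pos_lt; lra).
  assert (Heps : 0 < eps) by (unfold eps; lra).
  destruct (is_lim_m_infty_eps h a eps Ha Heps) as [M HM].
  destruct (is_lim_p_infty_eps h b eps Hb Heps) as [N HN].
  set (l := Rmin M N - 1). set (r := Rmax M N + 1).
  assert (Hl : l < M) by (unfold l; generalize (Rmin_l M N); lra).
  assert (Hr : N < r) by (unfold r; generalize (Rmax_r M N); lra).
  assert (Hlr : l < r) by (unfold l, r; generalize (Rmin_l M N) (Rmax_l M N); lra).
  destruct (MVT_cor2 h (Derive h) l r Hlr) as [x [Hx _]];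
    [intros; apply is_derive_Reals, Derive_correct, Hd |].
  exists x; intro H0. rewrite H0, Rmult_0_l in Hx.
  specialize (HM l Hl). specialize (HN r Hr).
  replace (h r) with (h l) in HN by lra. unfold eps in *.
  assert (Rabs (b - a) <= Rabs (h l - a) + Rabs (b - h l)).
  { replace (b - a) with ((h l - a) + (b - h l)) by ring. apply Rabs_triang. }
  rewrite Rabs_minus_sym in HN. lra.
Qed.

Lemma lipschitz_of_deriv_bound (h : R -> R) (a b s u v : R) : (forall x, ex_derive h x) ->
  (forall x, a <= x <= b -> Rabs (Derive h x) <= s) -> a <= u <= b -> a <= v <= b ->
  Rabs (h u - h v) <= s * Rabs (u - v).
Proof.
  intros Hd Hs Hu Hv.
  destruct (MVT_abs h (Derive h) v u) as [x [Hx Hxint]];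
    [intros; apply is_derive_Reals, Derive_correct, Hd |].
  rewrite Hx. apply Rmult_le_compat_r; [apply Rabs_pos | apply Hs].
  generalize (Rmin_l v u) (Rmin_r v u) (Rmax_l v u) (Rmax_r v u)
    (Rmin_glb v u a ltac:(lra) ltac:(lra)) (Rmax_lub v u b ltac:(lra) ltac:(lra)).
  lra.
Qed.

Lemma tau_m_bound (f : R -> R) (tau : R) : (forall u, continuous (Derive f) u) ->
  Derive f 0 <> 0 -> tau < tau_m f ->
  exists s, tau * s < 1 /\ forall u, 0 <= u <= 1 -> Rabs (Derive f u) <= s.
Proof.
  intros Hc Hf0 Htau.
  unfold tau_m, sup_abs_deriv01 in Htau.
  set (A := fun y => exists u, 0 <= u <= 1 /\ y = Rabs (Derive f u)) in Htau.
  assert (HA0 : A (Rabs (Derive f 0))) by (exists 0; split; [lra | reflexivity]).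
  destruct (Lub_Rbar_correct A) as [Hub Hlub].
  destruct (Lub_Rbar A) as [s | |] eqn:Hs.
  - exists s. split.
    + assert (Hs0 : 0 < s) by (apply Rlt_le_trans with (Rabs (Derive f 0));
        [apply Rabs_pos_lt, Hf0 | exact (Hub _ HA0)]).
      simpl in Htau. apply (Rmult_lt_compat_r s) in Htau; [|exact Hs0].
      rewrite Rinv_l in Htau by lra. exact Htau.
    + intros u Hu. exact (Hub _ (ex_intro _ u (conj Hu eq_refl))).
  - exfalso.
    destruct (continuity_ab_maj (fun u => Rabs (Derive f u)) 0 1) as [um [Hum _]]; [lra | |].
    { intros u _. apply continuity_pt_filterlim, continuous_Rabs_comp, Hc. }
    apply (Hlub (Finite (Rabs (Derive f um)))).
    intros y [u [Hu ->]]. exact (Hum u Hu).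
  - exfalso; exact (Hub _ HA0).
Qed.

Lemma ex_crossing (h : R -> R) (a b y : R) : (forall x, continuous h x) ->
  is_lim h m_infty a -> is_lim h p_infty b -> a < y < b -> exists x, h x = y.
Proof.
  intros Hc Ha Hb Hy.
  destruct (is_lim_m_infty_eps h a (y - a) Ha) as [M HM]; [lra|].
  destruct (is_lim_p_infty_eps h b (b - y) Hb) as [N HN]; [lra|].
  set (l := Rmin M N - 1). set (r := Rmax M N + 1).
  assert (Hl : h l < y).
  { assert (Hlt : l < M) by (unfold l; generalize (Rmin_l M N); lra).
    specialize (HM l Hlt). apply Rabs_def2 in HM. lra. }
  assert (Hr : y < h r).
  { assert (Hlt : N < r) by (unfold r; generalize (Rmax_r M N); lra).
    specialize (HN r Hlt). apply Rabs_def2 in HN. lra. }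
  destruct (IVT_gen h l r y) as [x [_ Hx]].
  - intro x; apply continuity_pt_filterlim, Hc.
  - rewrite Rmin_left, Rmax_right; lra.
  - exists x; exact Hx.
Qed.

Section TravellingWave.

Variables (f : R -> R) (alpha tau c : R) (U V : R -> R).
Hypothesis f_smooth : smooth f.
Hypothesis f_bistable : bistable f alpha.
Hypothesis tau_ge0 : 0 <= tau.
Hypothesis tau_lt_tau_m : tau < tau_m f.
Hypothesis UV_wave : tw_solution f tau c U V.

Lemma f_ex_derive x : ex_derive f x. Proof. exact (f_smooth 1%nat x). Qed.
Lemma f_continuous x : continuous f x.
Proof. apply ex_derive_continuous_R, f_ex_derive. Qed.
Lemma Df_continuous x : continuous (Derive f) x.
Proof. apply ex_derive_continuous_R. exact (f_smooth 2%nat x). Qed.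

Lemma alpha_01 : 0 < alpha < 1.
Proof. now destruct f_bistable as (? & _). Qed.
Lemma f0 : f 0 = 0.
Proof. now destruct f_bistable as (_ & ? & _). Qed.
Lemma f_alpha : f alpha = 0.
Proof. now destruct f_bistable as (_ & _ & ? & _). Qed.
Lemma f1 : f 1 = 0.
Proof. now destruct f_bistable as (_ & _ & _ & ? & _). Qed.
Lemma Df0_neg : Derive f 0 < 0.
Proof. now destruct f_bistable as (_ & _ & _ & _ & ? & _). Qed.
Lemma f_pos_lt0 u : u < 0 -> 0 < f u.
Proof. now destruct f_bistable as (_ & _ & _ & _ & _ & _ & _ & H & _); apply H. Qed.
Lemma f_pos_alpha1 u : alpha < u < 1 -> 0 < f u.
Proof. now destruct f_bistable as (_ & _ & _ & _ & _ & _ & _ & _ & H & _); apply H. Qed.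
Lemma f_neg_0alpha u : 0 < u < alpha -> f u < 0.
Proof. now destruct f_bistable as (_ & _ & _ & _ & _ & _ & _ & _ & _ & H & _); apply H. Qed.
Lemma f_neg_gt1 u : 1 < u -> f u < 0.
Proof. now destruct f_bistable as (_ & _ & _ & _ & _ & _ & _ & _ & _ & _ & H); apply H. Qed.

Lemma U_ex_derive x : ex_derive U x. Proof. apply UV_wave. Qed.
Lemma U_is_derive x : is_derive U x (Derive U x).
Proof. apply Derive_correct, U_ex_derive. Qed.
Lemma U_continuous x : continuous U x.
Proof. apply ex_derive_continuous_R, U_ex_derive. Qed.
Lemma V_ex_derive x : ex_derive V x. Proof. apply UV_wave. Qed.
Lemma wave_eq1 x : c * Derive U x + Derive V x + f (U x) = 0. Proof. apply UV_wave. Qed.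
Lemma wave_eq2 x : Derive U x + c * tau * Derive V x - V x = 0. Proof. apply UV_wave. Qed.
Lemma U_lim_m : is_lim U m_infty 0. Proof. apply UV_wave. Qed.
Lemma V_lim_m : is_lim V m_infty 0. Proof. apply UV_wave. Qed.
Lemma U_lim_p : is_lim U p_infty 1. Proof. apply UV_wave. Qed.
Lemma V_lim_p : is_lim V p_infty 0. Proof. apply UV_wave. Qed.

Definition D : R := 1 - c ^ 2 * tau.
Definition g (u : R) : R := 1 - tau * Derive f u.
Definition F (u : R) : R := RInt f 0 u.

Lemma dV_eq x : Derive V x = - c * Derive U x - f (U x).
Proof. generalize (wave_eq1 x); lra. Qed.

Lemma V_eq x : V x = D * Derive U x - c * tau * f (U x).
Proof.
  replace (V x) with (Derive U x + c * tau * Derive V x) by (generalize (wave_eq2 x); lra).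
  rewrite dV_eq. unfold D. ring.
Qed.

Lemma f_ex_RInt a b : ex_RInt f a b.
Proof. apply (ex_RInt_continuous (V := R_CompleteNormedModule)); intros; apply f_continuous. Qed.

Lemma F_deriv u : is_derive F u (f u).
Proof.
  apply (is_derive_RInt (V := R_CompleteNormedModule) f F 0); [|apply f_continuous].
  apply filter_forall; intro b. apply (RInt_correct (V := R_CompleteNormedModule)), f_ex_RInt.
Qed.

Lemma F_continuous u : continuous F u.
Proof. apply ex_derive_continuous_R; eexists; apply F_deriv. Qed.

Lemma F_0 : F 0 = 0.
Proof. unfold F; rewrite RInt_point; reflexivity. Qed.

Lemma F_neg u : u < alpha -> u <> 0 -> F u < 0.
Proof.
  intros Hu Hu0. unfold F. destruct (Rlt_le_dec 0 u) as [Hpos | Hneg].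
  - assert (H := RInt_lt f (fun _ => 0) 0 u Hpos).
    rewrite RInt_zero in H.
    apply H; intros; [apply continuous_const | apply f_continuous | apply f_neg_0alpha; lra].
  - rewrite <- opp_RInt_swap by apply f_ex_RInt.
    enough (0 < RInt f u 0) by (unfold opp; simpl; lra).
    apply RInt_gt_0; [lra | intros; apply f_pos_lt0; lra | intros; apply f_continuous].
Qed.

Lemma F_lt_F1 u : alpha < u -> u <> 1 -> F u < F 1.
Proof.
  intros Hu Hu1. unfold F. rewrite <- (RInt_Chasles f 0 u 1) by apply f_ex_RInt.
  enough (0 < RInt f u 1) by (unfold plus; simpl; lra).
  destruct (Rlt_le_dec u 1) as [Hlt | Hge].
  - apply RInt_gt_0; [lra | intros; apply f_pos_alpha1; lra | intros; apply f_continuous].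
  - rewrite <- opp_RInt_swap by apply f_ex_RInt.
    assert (H := RInt_lt f (fun _ => 0) 1 u ltac:(lra)).
    rewrite RInt_zero in H.
    enough (RInt f 1 u < 0) by (unfold opp; simpl; lra).
    apply H; intros; [apply continuous_const | apply f_continuous | apply f_neg_gt1; lra].
Qed.

Lemma Df_bound : exists s, tau * s < 1 /\ forall u, 0 <= u <= 1 -> Rabs (Derive f u) <= s.
Proof.
  apply tau_m_bound; [exact Df_continuous | generalize Df0_neg; lra | exact tau_lt_tau_m].
Qed.

Lemma g_lower_bound s : (forall u, 0 <= u <= 1 -> Rabs (Derive f u) <= s) ->
  forall u, 0 <= u <= 1 -> 1 - tau * s <= g u.
Proof.
  intros Hs u Hu. unfold g.
  assert (Derive f u <= s) by (eapply Rle_trans; [apply Rle_abs | exact (Hs u Hu)]).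
  assert (tau * Derive f u <= tau * s) by (apply Rmult_le_compat_l; lra).
  lra.
Qed.

Lemma g_pos u : 0 <= u <= 1 -> 0 < g u.
Proof.
  intro Hu. destruct Df_bound as [s [Hts Hs]].
  generalize (g_lower_bound s Hs u Hu); lra.
Qed.

Lemma g_continuous u : continuous g u.
Proof.
  apply (continuous_minus (fun _ => 1) (fun v => tau * Derive f v)); [apply continuous_const|].
  apply (continuous_mult (fun _ => tau) (Derive f)); [apply continuous_const | apply Df_continuous].
Qed.

Lemma dissipation_nonneg x : 0 < g (U x) -> 0 <= g (U x) * Derive U x ^ 2.
Proof. intro H. apply Rmult_le_pos; [lra | apply pow2_ge_0]. Qed.

Lemma dissipation_pos x : 0 < g (U x) -> Derive U x <> 0 -> 0 < g (U x) * Derive U x ^ 2.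
Proof. intros H H0. apply Rmult_lt_0_compat; [exact H | apply pow2_gt_0, H0]. Qed.

Lemma U_range_of_extrema :
  (forall xm, (forall x, U x <= U xm) -> 0 <= f (U xm)) ->
  (forall xm, (forall x, U xm <= U x) -> f (U xm) <= 0) ->
  forall x, 0 <= U x <= 1.
Proof.
  intros Hmax Hmin x.
  split; apply Rnot_lt_le; intro Hx.
  - destruct (ex_global_min U 0 1 x U_continuous U_lim_m U_lim_p) as [xm Hxm]; [lra | lra |].
    specialize (Hmin xm Hxm). specialize (Hxm x).
    generalize (f_pos_lt0 (U xm) ltac:(lra)); lra.
  - destruct (ex_global_max U 0 1 x U_continuous U_lim_m U_lim_p) as [xm Hxm]; [lra | lra |].
    specialize (Hmax xm Hxm). specialize (Hxm x).
    generalize (f_neg_gt1 (U xm) ltac:(lra)); lra.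
Qed.

Section NonDegenerate.

Hypothesis D_neq0 : D <> 0.

Definition d2U (x : R) : R := (Derive V x + c * tau * Derive f (U x) * Derive U x) / D.

Lemma dU_eq x : Derive U x = (V x + c * tau * f (U x)) / D.
Proof. rewrite V_eq. field. exact D_neq0. Qed.

Lemma dU_deriv x : is_derive (Derive U) x (d2U x).
Proof.
  apply (is_derive_ext (fun y => (V y + c * tau * f (U y)) / D)); [intro; symmetry; apply dU_eq|].
  auto_derive; [repeat split; [apply V_ex_derive | apply f_ex_derive | apply U_ex_derive]|].
  Derive_eta. unfold d2U. field. exact D_neq0.
Qed.

Lemma D_d2U x : D * d2U x = - c * g (U x) * Derive U x - f (U x).
Proof. unfold d2U, g. rewrite dV_eq. field. exact D_neq0. Qed.

Definition E (x : R) : R := D * Derive U x ^ 2 / 2 + F (U x).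

Lemma E_deriv x : is_derive E x (- c * g (U x) * Derive U x ^ 2).
Proof.
  unfold E. auto_derive.
  - repeat split; [eexists; apply dU_deriv | eexists; apply F_deriv | apply U_ex_derive].
  - Derive_eta.
    rewrite (is_derive_unique _ _ _ (dU_deriv x)), (is_derive_unique _ _ _ (F_deriv (U x))).
    replace (- c * g (U x) * Derive U x ^ 2)
      with (Derive U x * (D * d2U x + f (U x))) by (rewrite D_d2U; ring).
    field.
Qed.

Lemma dU_lim (x : Rbar) (u : R) : f u = 0 ->
  is_lim U x u -> is_lim V x 0 -> is_lim (Derive U) x 0.
Proof.
  intros Hfu HU HV.
  apply (is_lim_ext (fun y => / D * V y + / D * c * tau * f (U y)));
    [intro y; rewrite dU_eq; field; exact D_neq0|].
  replace (Finite 0) with (Finite (/ D * 0 + / D * c * tau * f u)) by (rewrite Hfu; f_equal; ring).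
  apply is_lim_lin_comb; [exact HV | apply is_lim_comp_continuous; [exact HU | apply f_continuous]].
Qed.

Lemma E_lim (x : Rbar) (u : R) : f u = 0 ->
  is_lim U x u -> is_lim V x 0 -> is_lim E x (F u).
Proof.
  intros Hfu HU HV.
  apply (is_lim_ext (fun y => D / 2 * (Derive U y * Derive U y) + 1 * F (U y)));
    [intro; unfold E; field|].
  replace (Finite (F u)) with (Finite (D / 2 * (0 * 0) + 1 * F u)) by (f_equal; ring).
  apply is_lim_lin_comb; [|apply is_lim_comp_continuous; [exact HU | apply F_continuous]].
  assert (HdU := dU_lim x u Hfu HU HV).
  exact (is_lim_mult _ _ x 0 0 HdU HdU I).
Qed.

Lemma E_lim_m : is_lim E m_infty 0.
Proof. rewrite <- F_0. exact (E_lim m_infty 0 f0 U_lim_m V_lim_m). Qed.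

Lemma E_lim_p : is_lim E p_infty (F 1).
Proof. exact (E_lim p_infty 1 f1 U_lim_p V_lim_p). Qed.

End NonDegenerate.

Lemma ex_dU_neq0 : exists x, Derive U x <> 0.
Proof. apply (ex_deriv_neq0 U 0 1); [exact U_ex_derive | exact U_lim_m | exact U_lim_p | lra]. Qed.

Section PositiveD.

Hypothesis D_pos : 0 < D.

Lemma U_range_D_pos x : 0 <= U x <= 1.
Proof.
  assert (D_neq0 : D <> 0) by lra.
  apply U_range_of_extrema; intros xm Hxm; generalize (D_d2U D_neq0 xm).
  - rewrite (global_max_deriv_eq0 U xm _ (U_is_derive xm) Hxm).
    generalize (global_max_deriv2_nonpos U (Derive U) xm _ U_is_derive (dU_deriv D_neq0 xm) Hxm).
    nra.
  - rewrite (global_min_deriv_eq0 U xm _ (U_is_derive xm) Hxm).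
    generalize (global_min_deriv2_nonneg U (Derive U) xm _ U_is_derive (dU_deriv D_neq0 xm) Hxm).
    nra.
Qed.

Lemma g_U_pos x : 0 < g (U x).
Proof. apply g_pos, U_range_D_pos. Qed.

Lemma F1_neg_of_speed_pos : 0 < c -> F 1 < 0.
Proof.
  intro Hc. destruct ex_dU_neq0 as [x0 Hx0].
  apply (limits_lt_of_deriv_nonpos E (fun x => - c * g (U x) * Derive U x ^ 2) 0 (F 1) x0).
  - apply E_deriv; lra.
  - intro x; generalize (dissipation_nonneg x (g_U_pos x)); nra.
  - generalize (dissipation_pos x0 (g_U_pos x0) Hx0); nra.
  - apply E_lim_m; lra.
  - apply E_lim_p; lra.
Qed.

Lemma F1_pos_of_speed_neg : c < 0 -> 0 < F 1.
Proof.
  intro Hc. destruct ex_dU_neq0 as [x0 Hx0].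
  enough (- F 1 < - 0) by lra.
  apply (limits_lt_of_deriv_nonpos (fun x => - E x) (fun x => c * g (U x) * Derive U x ^ 2)
    (- 0) (- F 1) x0).
  - intro x. replace (c * g (U x) * Derive U x ^ 2)
      with (- (- c * g (U x) * Derive U x ^ 2)) by ring.
    apply is_derive_Ropp, E_deriv; lra.
  - intro x; generalize (dissipation_nonneg x (g_U_pos x)); nra.
  - generalize (dissipation_pos x0 (g_U_pos x0) Hx0); nra.
  - exact (is_lim_opp E m_infty 0 (E_lim_m ltac:(lra))).
  - exact (is_lim_opp E p_infty (F 1) (E_lim_p ltac:(lra))).
Qed.

Lemma F1_zero_of_speed_zero : c = 0 -> F 1 = 0.
Proof.
  intro Hc. assert (D_neq0 : D <> 0) by lra.
  assert (HdE : forall x, is_derive E x 0).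
  { intro x. replace 0 with (- c * g (U x) * Derive U x ^ 2) by (rewrite Hc; ring).
    apply E_deriv, D_neq0. }
  destruct (between_limits_of_deriv_nonpos E (fun _ => 0) 0 (F 1) HdE ltac:(intro; lra)
    (E_lim_m D_neq0) (E_lim_p D_neq0) 0).
  destruct (between_limits_of_deriv_nonpos (fun x => - E x) (fun _ => - 0) (- 0) (- F 1))
    with (y := 0).
  - intro x; apply is_derive_Ropp, HdE.
  - intro; lra.
  - exact (is_lim_opp E m_infty 0 (E_lim_m D_neq0)).
  - exact (is_lim_opp E p_infty (F 1) (E_lim_p D_neq0)).
  - lra.
Qed.

End PositiveD.

Lemma speed_neq0_of_D_nonpos : D <= 0 -> c <> 0.
Proof. unfold D; intros HD Hc; rewrite Hc in HD; lra. Qed.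

Section ZeroD.

Hypothesis D_zero : D = 0.

Lemma dU_relation_D_zero x : c * g (U x) * Derive U x = - f (U x).
Proof.
  assert (HV : forall y, V y = - c * tau * f (U y)) by (intro y; rewrite V_eq, D_zero; ring).
  assert (HdV : Derive V x = - c * tau * Derive f (U x) * Derive U x).
  { rewrite (Derive_ext _ _ x HV). apply is_derive_unique.
    auto_derive; [split; [apply f_ex_derive | split; [apply U_ex_derive | exact I]] |].
    Derive_eta. ring. }
  generalize (wave_eq1 x). rewrite HdV. unfold g. lra.
Qed.

Lemma U_range_D_zero x : 0 <= U x <= 1.
Proof.
  apply U_range_of_extrema; intros xm Hxm; generalize (dU_relation_D_zero xm).
  - rewrite (global_max_deriv_eq0 U xm _ (U_is_derive xm) Hxm). lra.
  - rewrite (global_min_deriv_eq0 U xm _ (U_is_derive xm) Hxm). lra.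
Qed.

Lemma dU_bound_D_zero : exists K, forall x, Rabs (Derive U x) <= K * Rabs (U x - alpha).
Proof.
  destruct Df_bound as [s [Hts Hs]].
  assert (Hc : 0 < Rabs c) by (apply Rabs_pos_lt, speed_neq0_of_D_nonpos; lra).
  set (m := Rabs c * (1 - tau * s)).
  assert (Hm : 0 < m) by (apply Rmult_lt_0_compat; lra).
  exists (s / m); intro x.
  assert (Hu := U_range_D_zero x).
  assert (Hg := g_lower_bound s Hs (U x) Hu).
  assert (Hlip : Rabs (f (U x)) <= s * Rabs (U x - alpha)).
  { rewrite <- (Rminus_0_r (f (U x))), <- f_alpha.
    apply (lipschitz_of_deriv_bound f 0 1); [exact f_ex_derive | exact Hs | exact Hu |].
    generalize alpha_01; lra. }
  rewrite <- Rabs_Ropp, <- dU_relation_D_zero, !Rabs_mult, (Rabs_right (g (U x))) in Hlip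
    by lra.
  apply (Rmult_le_reg_r m); [exact Hm|].
  replace (s / m * Rabs (U x - alpha) * m) with (s * Rabs (U x - alpha)) by (field; lra).
  assert (0 <= Rabs c * Rabs (Derive U x)) by (apply Rmult_le_pos; apply Rabs_pos).
  unfold m. nra.
Qed.

Lemma D_zero_false : False.
Proof.
  destruct dU_bound_D_zero as [K HK].
  destruct (ex_crossing U 0 1 alpha U_continuous U_lim_m U_lim_p alpha_01) as [x0 Hx0].
  assert (Hstay : forall y, x0 <= y -> U y - alpha = 0).
  { apply (eq0_of_abs_deriv_le (fun y => U y - alpha) (Derive U) K x0); [| exact HK | lra].
    intro x. auto_derive; [apply U_ex_derive|]. Derive_eta. ring. }
  destruct (is_lim_p_infty_eps U 1 (1 - alpha) U_lim_p) as [N HN]; [generalize alpha_01; lra|].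
  set (y := Rmax x0 N + 1).
  assert (Hy : x0 < y /\ N < y) by (unfold y; generalize (Rmax_l x0 N) (Rmax_r x0 N); lra).
  assert (HUy : U y = alpha) by (generalize (Hstay y ltac:(lra)); lra).
  specialize (HN y ltac:(lra)).
  rewrite HUy, Rabs_left in HN by (generalize alpha_01; lra). lra.
Qed.

End ZeroD.

Lemma g_pos_near u0 : 0 <= u0 <= 1 -> exists d, 0 < d /\ forall u, Rabs (u - u0) < d -> 0 < g u.
Proof.
  intro Hu0. assert (Hg0 := g_pos u0 Hu0).
  destruct (continuous_eps g u0 (g u0) (g_continuous u0) Hg0) as [d [Hd Hnear]].
  exists d; split; [exact Hd|]. intros u Hu. specialize (Hnear u Hu). apply Rabs_def2 in Hnear. lra.
Qed.

Section NegativeD.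

Hypothesis D_neg : D < 0.

Lemma E_le_F x : E x <= F (U x).
Proof. unfold E. generalize (pow2_ge_0 (Derive U x)). nra. Qed.

Lemma speed_neg_false : c < 0 -> False.
Proof.
  intro Hc. assert (D_neq0 : D <> 0) by lra.
  destruct (g_pos_near 0) as [dg [Hdg Hg]]; [lra|].
  set (d := Rmin dg alpha).
  assert (Hd : 0 < d) by (apply Rmin_glb_lt; generalize alpha_01; lra).
  assert (Hd_dg : d <= dg) by apply Rmin_l.
  assert (Hd_alpha : d <= alpha) by apply Rmin_r.
  assert (HU0 : forall x, U x = 0).
  { apply (eq_of_close_on_left_tails U 0 d); [exact U_continuous | lra | exact U_lim_m |].
    intros T HT.
    assert (HET : 0 <= E T).
    { apply (is_lim_le_const E m_infty 0 (E T)); [exists T; intros y Hy | exact (E_lim_m D_neq0)].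
      apply (nondecreasing_of_deriv_nonneg E (fun x => - c * g (U x) * Derive U x ^ 2) y T);
        [lra | intros; apply E_deriv, D_neq0 |].
      intros z Hz. assert (Hgz : 0 < g (U z)) by (apply Hg; specialize (HT z (proj2 Hz)); lra).
      generalize (dissipation_nonneg z Hgz); nra. }
    generalize (E_le_F T) (HT T (Rle_refl T)). rewrite Rminus_0_r. intros HEF HUT.
    apply NNPP; intro HT0. apply Rabs_def2 in HUT.
    generalize (F_neg (U T) ltac:(lra) HT0). lra. }
  destruct (is_lim_p_infty_eps U 1 1 U_lim_p) as [N HN]; [lra|].
  specialize (HN (N + 1) ltac:(lra)). rewrite HU0, Rminus_0_l, Rabs_Ropp, Rabs_R1 in HN. lra.
Qed.

Lemma speed_pos_false : 0 < c -> False.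
Proof.
  intro Hc. assert (D_neq0 : D <> 0) by lra.
  destruct (g_pos_near 1) as [dg [Hdg Hg]]; [lra|].
  set (d := Rmin dg (1 - alpha)).
  assert (Hd : 0 < d) by (apply Rmin_glb_lt; generalize alpha_01; lra).
  assert (Hd_dg : d <= dg) by apply Rmin_l.
  assert (Hd_alpha : d <= 1 - alpha) by apply Rmin_r.
  assert (HU1 : forall x, U x = 1).
  { apply (eq_of_close_on_right_tails U 1 d); [exact U_continuous | lra | exact U_lim_p |].
    intros T HT.
    assert (HET : F 1 <= E T).
    { apply (is_lim_le_const E p_infty (F 1) (E T));
        [exists T; intros y Hy | exact (E_lim_p D_neq0)].
      apply (nonincreasing_of_deriv_nonpos E (fun x => - c * g (U x) * Derive U x ^ 2) T y);
        [lra | intros; apply E_deriv, D_neq0 |].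
      intros z Hz. assert (Hgz : 0 < g (U z)) by (apply Hg; specialize (HT z (proj1 Hz)); lra).
      generalize (dissipation_nonneg z Hgz); nra. }
    generalize (E_le_F T) (HT T (Rle_refl T)). intros HEF HUT.
    apply NNPP; intro HT1. apply Rabs_def2 in HUT.
    generalize (F_lt_F1 (U T) ltac:(lra) HT1). lra. }
  destruct (is_lim_m_infty_eps U 0 1 U_lim_m) as [M HM]; [lra|].
  specialize (HM (M - 1) ltac:(lra)). rewrite HU1, Rminus_0_r, Rabs_R1 in HM. lra.
Qed.

End NegativeD.

Lemma D_pos : 0 < D.
Proof.
  destruct (Rtotal_order D 0) as [Hneg | [Hzero | Hpos]]; [exfalso | exfalso | exact Hpos].
  - destruct (Rtotal_order c 0) as [Hc | [Hc | Hc]].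
    + exact (speed_neg_false Hneg Hc).
    + exact (speed_neq0_of_D_nonpos ltac:(lra) Hc).
    + exact (speed_pos_false Hneg Hc).
  - exact (D_zero_false Hzero).
Qed.

End TravellingWave.

Theorem proposition2p1 (f : R -> R) (alpha tau c : R) (U V : R -> R) :
  smooth f -> bistable f alpha ->
  0 <= tau -> tau < tau_m f ->
  tw_solution f tau c U V ->
  ((0 < c <-> RInt f 0 1 < 0) /\
   (c = 0 <-> RInt f 0 1 = 0) /\
   (c < 0 <-> 0 < RInt f 0 1)) /\
  c ^ 2 * tau < 1.
Proof.
  intros Hf Hbis Htau0 Htau Hwave.
  assert (HD : 0 < 1 - c ^ 2 * tau) by (eapply D_pos; eassumption).
  assert (Hpos : 0 < c -> RInt f 0 1 < 0) by (eapply F1_neg_of_speed_pos; eassumption).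
  assert (Hzero : c = 0 -> RInt f 0 1 = 0) by (eapply F1_zero_of_speed_zero; eassumption).
  assert (Hneg : c < 0 -> 0 < RInt f 0 1) by (eapply F1_pos_of_speed_neg; eassumption).
  split; [|lra].
  destruct (Rtotal_order c 0) as [Hc | [Hc | Hc]].
  - specialize (Hneg Hc). repeat split; intros; lra.
  - specialize (Hzero Hc). repeat split; intros; lra.
  - specialize (Hpos Hc). repeat split; intros; lra.
Qed.
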